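(* Let $d\ge2$, let $p,q\in\mathbb{H}^d$, and let $t$ be the highest point (maximal $z$-coordinate) on the geodesic segment $pq$. Let $C_t$ be the tile of $T^0$ containing $t$, and let $\pi_x(C_t)\subset\mathbb{R}^{d-1}$ be its projection to the $x$-coordinates. Then the Euclidean diameter of $\pi_x(C_t)$ is strictly greater than $\|x(p)-x(q)\|/4$.
   Context: Half-space model: points of $\mathbb{H}^d$ are $(x,z)\in\mathbb{R}^{d-1}\times\mathbb{R}_{>0}$; geodesics are vertical segments or arcs of Euclidean circles orthogonal to $\{z=0\}$. Binary tiling $T^0$: let $C_0$ be the Euclidean box $[0,\tfrac{1}{\sqrt{d-1}}]^{d-1}\times[1,2]$; the tiles of $T^0$ are the images of $C_0$ under $(x,z)\mapsto\sigma\cdot(x+\tau,z)$ for all $\tau=a/\sqrt{d-1}$, $a\in\mathbb{Z}^{d-1}$, and $\sigma=2^b$, $b\in\mathbb{Z}$. $\|\cdot\|$ is the Euclidean norm on $\mathbb{R}^{d-1}$. *)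

From HB Require Import structures.
From mathcomp Require Import all_boot all_order all_algebra.
From mathcomp Require Import all_classical reals.
Set Implicit Arguments. Unset Strict Implicit. Unset Printing Implicit Defensive.
Import Order.TTheory GRing.Theory Num.Theory.
Local Open Scope ring_scope.
Local Open Scope classical_set_scope.

Section Defs.
Variable R : realType.
Variable n : nat. (* n = d - 1 *)

Definition hpoint := ('rV[R]_n * R)%type.
Definition in_Hd (p : hpoint) : Prop := 0 < p.2.

Definition sqnorm (v : 'rV[R]_n) : R := \sum_(i < n) (v ord0 i) ^+ 2.
Definition enorm (v : 'rV[R]_n) : R := Num.sqrt (sqnorm v).

(* The geodesic segment pq in the half-space model:
   - if x(p) = x(q): the vertical Euclidean segment between p and q;
   - otherwise: the arc between p and q of the Euclidean circle through p, q
     lying in the vertical plane containing p, q, with centre c on {z = 0}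
     (i.e. orthogonal to {z=0}); along this arc the x-coordinate runs over the
     Euclidean segment [x(p), x(q)]. *)
Definition geodesic_segment (p q : hpoint) : set hpoint :=
  if p.1 == q.1 then
    [set u : hpoint | u.1 = p.1 /\ Num.min p.2 q.2 <= u.2 <= Num.max p.2 q.2]
  else
    [set u : hpoint | 0 < u.2 /\
      exists (s lam r : R), let c := p.1 + s *: (q.1 - p.1) in
        0 <= lam <= 1 /\ u.1 = p.1 + lam *: (q.1 - p.1) /\
        sqnorm (p.1 - c) + p.2 ^+ 2 = r ^+ 2 /\
        sqnorm (q.1 - c) + q.2 ^+ 2 = r ^+ 2 /\
        sqnorm (u.1 - c) + u.2 ^+ 2 = r ^+ 2].

(* Tiles of the binary tiling T^0: image of C_0 = [0,1/sqrt n]^n x [1,2]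
   under (x,z) |-> sigma (x + a/sqrt n, z), sigma = 2^b, a in Z^n, b in Z. *)
Definition tile (a : 'I_n -> int) (b : int) : set hpoint :=
  let sigma := (2%:R : R) ^ b in
  let s := Num.sqrt (n%:R : R) in
  [set u : hpoint | sigma <= u.2 <= sigma * 2%:R /\
           forall i : 'I_n, sigma * ((a i)%:~R / s) <= u.1 ord0 i
                            <= sigma * (((a i)%:~R + 1) / s)].

Definition is_tile (C : set hpoint) : Prop :=
  exists (a : 'I_n -> int) (b : int), C = tile a b.

Definition proj_x (C : set hpoint) : set 'rV[R]_n := fst @` C.

Definition ediam (A : set 'rV[R]_n) : R :=
  sup [set enorm (x - y) | x in A & y in A].

End Defs.

(** The highest point t of a geodesic is at least as high as the apex of the
    supporting half-circle (or of one endpoint, if the apex lies outside the arc);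
    either way the chord satisfies |x(p) - x(q)| < 2 z(t).  A tile at scale
    2^b has height at most 2^(b+1) and x-projection a cube of diameter 2^b, so
    |x(p) - x(q)| < 2 z(t) <= 4 * 2^b <= 4 diam(pi_x(C_t)). *)
From HB Require Import structures.
From mathcomp Require Import all_boot all_order all_algebra.
From mathcomp Require Import all_classical reals.
From mathcomp Require Import ring lra.

Set Implicit Arguments.
Unset Strict Implicit.
Unset Printing Implicit Defensive.
Import Order.TTheory GRing.Theory Num.Theory.
Local Open Scope ring_scope.
Local Open Scope classical_set_scope.

Section Norm.
Variables (R : realType) (n : nat).
Implicit Types (v w : 'rV[R]_n) (c k : R).

Lemma sqnorm_ge0 v : 0 <= sqnorm v.
Proof. by apply: sumr_ge0 => i _; exact: sqr_ge0. Qed.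

Lemma sqnormZ k v : sqnorm (k *: v) = k ^+ 2 * sqnorm v.
Proof. by rewrite /sqnorm mulr_sumr; apply: eq_bigr => i _; rewrite mxE exprMn. Qed.

Lemma sqnorm0 : sqnorm (0 : 'rV[R]_n) = 0.
Proof. by rewrite -(scale0r 0) sqnormZ expr0n mul0r. Qed.

Lemma sqnormB v w : sqnorm (v - w) = sqnorm (w - v).
Proof. by rewrite -opprB -scaleN1r sqnormZ sqrrN expr1n mul1r. Qed.

Lemma enorm_lt v c : 0 < c -> sqnorm v < c ^+ 2 -> enorm v < c.
Proof.
by move=> c0 lt_vc; rewrite -(gtr0_norm c0) -sqrtr_sqr ltr_sqrt ?exprn_gt0.
Qed.

Lemma enorm_le v c : 0 <= c -> sqnorm v <= c ^+ 2 -> enorm v <= c.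
Proof. by move=> c0 le_vc; rewrite -(ger0_norm c0) -sqrtr_sqr; exact: ler_wsqrtr. Qed.

Lemma enorm_sqr v c : 0 <= c -> sqnorm v = c ^+ 2 -> enorm v = c.
Proof. by move=> c0 vc; rewrite /enorm vc sqrtr_sqr ger0_norm. Qed.

Lemma sqr_sub_le_width (lo hi x y : R) : lo <= x <= hi -> lo <= y <= hi ->
  (x - y) ^+ 2 <= (hi - lo) ^+ 2.
Proof. by move=> /andP[? ?] /andP[? ?]; nra. Qed.

Lemma line_sub v w k c : (v + k *: w) - (v + c *: w) = (k - c) *: w.
Proof. by apply/rowP => i; rewrite !mxE; ring. Qed.

End Norm.

Section Geodesic.
Variables (R : realType) (n : nat).
Implicit Types (p q u : hpoint R n).

Lemma geodesic_arcE p q u : p.1 != q.1 ->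
  let D := sqnorm (q.1 - p.1) in
  geodesic_segment p q u <->
  0 < u.2 /\ exists s lam r, 0 <= lam <= 1 /\ u.1 = p.1 + lam *: (q.1 - p.1) /\
    s ^+ 2 * D + p.2 ^+ 2 = r ^+ 2 /\ (1 - s) ^+ 2 * D + q.2 ^+ 2 = r ^+ 2 /\
    (lam - s) ^+ 2 * D + u.2 ^+ 2 = r ^+ 2.
Proof.
move=> /negbTE pq D; rewrite /geodesic_segment pq.
have dist x k c : x = p.1 + k *: (q.1 - p.1) ->
    sqnorm (x - (p.1 + c *: (q.1 - p.1))) = (k - c) ^+ 2 * D.
  by move=> ->; rewrite line_sub sqnormZ.
have dist_p c : sqnorm (p.1 - (p.1 + c *: (q.1 - p.1))) = c ^+ 2 * D.
  by rewrite (dist _ 0) ?sub0r ?sqrrN // scale0r addr0.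
have dist_q c : sqnorm (q.1 - (p.1 + c *: (q.1 - p.1))) = (1 - c) ^+ 2 * D.
  by rewrite (dist _ 1) // scale1r addrC subrK.
split=> -[u2 [s [lam [r /= [lam01 [u1]]]]]]; last first.
  by move=> eqs; split=> //; exists s, lam, r; rewrite dist_p dist_q (dist _ lam).
by rewrite dist_p dist_q (dist _ lam) // => eqs; split=> //; exists s, lam, r.
Qed.

Lemma geodesic_segment_in_Hd p q u : in_Hd p -> in_Hd q ->
  geodesic_segment p q u -> in_Hd u.
Proof.
rewrite /in_Hd /geodesic_segment => p2 q2; case: ifP => _ [] //.
by move=> _ /andP[+ _]; rewrite ge_min => /orP[] /(lt_le_trans _)->.
Qed.

(* [r] is the radius of the supporting circle and [s] locates its centre on the
   line through x(p), x(q); the apex is on the arc exactly when 0 <= s <= 1. *)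
Lemma chord_lt_top (D s r p2 q2 t2 : R) : 0 <= D -> 0 < p2 -> 0 < q2 ->
  s ^+ 2 * D + p2 ^+ 2 = r ^+ 2 -> (1 - s) ^+ 2 * D + q2 ^+ 2 = r ^+ 2 ->
  p2 <= t2 -> q2 <= t2 -> (0 <= s <= 1 -> r ^+ 2 <= t2 ^+ 2) ->
  D < 4%:R * t2 ^+ 2.
Proof.
move=> D0 p20 q20 eq_p eq_q pt qt apex_t.
have [s0|s0] := ltP s 0; first nra.
have [s1|s1] := ltP 1 s; first nra.
have := apex_t (introT andP (conj s0 s1)).
by have [s2|s2] := ltP s 2%:R^-1; nra.
Qed.

Lemma geodesic_top_chord p q t : in_Hd p -> in_Hd q -> geodesic_segment p q t ->
  (forall u, geodesic_segment p q u -> u.2 <= t.2) ->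
  sqnorm (p.1 - q.1) < 4%:R * t.2 ^+ 2.
Proof.
rewrite /in_Hd => p2 q2 pqt top.
have [pq|pq] := eqVneq p.1 q.1.
  have pt : p.2 <= t.2.
    by apply: top; rewrite /geodesic_segment pq eqxx /= ge_min le_max !lexx.
  by rewrite pq subrr sqnorm0; nra.
move: pqt => /(geodesic_arcE _ pq) [_ [s [_ [r [_ [_ [eq_p [eq_q _]]]]]]]].
have on_arc lam h : 0 < h -> 0 <= lam <= 1 ->
    (lam - s) ^+ 2 * sqnorm (q.1 - p.1) + h ^+ 2 = r ^+ 2 ->
    h <= t.2.
  move=> h0 lam01 eq_h; apply: (top (p.1 + lam *: (q.1 - p.1), h)).
  by apply/(geodesic_arcE _ pq); split=> //; exists s, lam, r.
rewrite sqnormB; apply: (chord_lt_top (sqnorm_ge0 _) p2 q2 eq_p eq_q).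
- by apply: (on_arc 0) => //; rewrite ?lexx ?ler01 // sub0r sqrrN.
- by apply: (on_arc 1) => //; rewrite ?lexx ?ler01.
move=> s01; have r0 : 0 < r ^+ 2.
  by have := sqnorm_ge0 (q.1 - p.1); nra.
have := on_arc s (Num.sqrt (r ^+ 2)); rewrite sqrtr_gt0 subrr expr0n mul0r add0r.
rewrite sqr_sqrtr ?(ltW r0) // => /(_ r0 s01 erefl) apex_t.
by rewrite -(sqr_sqrtr (ltW r0)); have := sqrtr_ge0 (r ^+ 2); nra.
Qed.

End Geodesic.

Section Tile.
Variables (R : realType) (n : nat) (a : 'I_n -> int) (b : int).
Hypothesis n_gt0 : (0 < n)%N.

Let sigma : R := 2%:R ^ b.
Let side : R := sigma / Num.sqrt n%:R.

Let sigma_gt0 : 0 < sigma. Proof. by rewrite exprz_gt0 ?ltr0n. Qed.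
Let sqrtn_gt0 : 0 < Num.sqrt (n%:R : R). Proof. by rewrite sqrtr_gt0 ltr0n. Qed.

Let side_sum : \sum_(i < n) side ^+ 2 = sigma ^+ 2.
Proof.
rewrite sumr_const card_ord -mulr_natl -[n%:R](@sqr_sqrtr R) ?ler0n //.
by rewrite /side; field; rewrite gt_eqF.
Qed.

Let corner (k : R) : 'rV[R]_n := \row_i (sigma * (((a i)%:~R + k) / Num.sqrt n%:R)).

Let corner_sub i : (corner 1 - corner 0) ord0 i = side.
Proof. by rewrite !mxE /side; field; rewrite gt_eqF. Qed.

Let corner_in_tile k : 0 <= k <= 1 -> proj_x (tile a b) (corner k).
Proof.
move=> /andP[k0 k1]; exists (corner k, sigma) => //.
split; first by rewrite lexx /= ler_peMr ?ler1n // ltW.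
move=> i; rewrite /= !mxE -/sigma !ler_pM2l // !ler_pM2r ?invr_gt0 //.
by rewrite -[X in X <= _]addr0 !lerD2l k0 k1.
Qed.

Lemma tile_proj_diam_ge : (2%:R : R) ^ b <= ediam (proj_x (tile a b)).
Proof.
apply: ub_le_sup; last first.
  exists (corner 1); first by apply: corner_in_tile; rewrite lexx ler01.
  exists (corner 0); first by apply: corner_in_tile; rewrite lexx ler01.
  apply: enorm_sqr; first exact: ltW.
  by rewrite -side_sum; apply: eq_bigr => i _; rewrite corner_sub.
exists sigma => _ [x [u [_ tu] <-] [y [v [_ tv] <-]] <-].
apply: enorm_le; first exact: ltW.
rewrite -side_sum; apply: ler_sum => i _; rewrite -(corner_sub i) !mxE addr0.
exact: sqr_sub_le_width.
Qed.

End Tile.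

Theorem mainTheorem10 (R : realType) (d : nat) (hd : (2 <= d)%N)
    (p q t : hpoint R d.-1) (Ct : set (hpoint R d.-1)) :
  in_Hd p -> in_Hd q ->
  geodesic_segment p q t ->
  (forall u, geodesic_segment p q u -> u.2 <= t.2) ->
  is_tile Ct -> Ct t ->
  ediam (proj_x Ct) > enorm (p.1 - q.1) / 4%:R.
Proof.
move=> hp hq pqt top [a [b ->]] [/andP[_ t_le] _].
have t2 : 0 < t.2 := geodesic_segment_in_Hd hp hq pqt.
have chord : enorm (p.1 - q.1) < 2%:R * t.2.
  by apply: enorm_lt; [lra | move: (geodesic_top_chord hp hq pqt top); nra].
have dim_gt0 : (0 < d.-1)%N by rewrite ltn_predRL.
have diam := tile_proj_diam_ge R a b dim_gt0.
lra.
Qed.
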